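(* Let $(X,\perp,Y,T)$ be a Heyting frame. Then for any stable sets $A,C\in\mathcal G(X)$ and any $x\in X$: $x\in(A\Rightarrow C)$ iff for all $z\in X$, if $x\le z$ and $z\in A$ then $z\in C$.
   Context: A sorted frame (polarity) is a triple $(X,\perp,Y)$ with $X,Y$ nonempty sets and ${\perp}\subseteq X\times Y$. For $U\subseteq X$ let $U'=\{y\in Y:\forall x\in U\ x\perp y\}$, and for $V\subseteq Y$ let ${}'V=\{x\in X:\forall y\in V\ x\perp y\}$. $A\subseteq X$ is stable if $A={}'(A')$; $B\subseteq Y$ co-stable if $B=({}'B)'$. $\mathcal{G}(X)$, $\mathcal{G}(Y)$ are the complete lattices of stable, resp. co-stable, sets. Preorders: $x\le z$ iff $\{x\}'\subseteq\{z\}'$ on $X$; $y\le v$ iff ${}'\{y\}\subseteq{}'\{v\}$ on $Y$; separated means both are partial orders. $\Gamma u$ is the set of elements above $u$. For $T\subseteq Y\times X\times Y$, $T'\subseteq X\times X\times Y$ is $uT'xv$ iff $\forall y\,(yTxv\Rightarrow u\perp y)$. An implicative frame is $(X,\perp,Y,T)$ with: (F0) $x\perp y$ iff $uT'xy$ for all $u\in X$; (F1) separated; (F2) each $\{y: yTxv\}$ equals $\Gamma w$ for some $w\in Y$; (F3) if $yTxv$, $x_1\le x$, $v_1\le v$ then $yTx_1v_1$; (F4) for all $u,x\in X,v\in Y$, $\{x_1:uT'x_1v\}$ is stable and $\{v_1:uT'xv_1\}$ is co-stable. Derived relations: $vR^{\partial11}zx$ iff $xT'zv$; $uR^{111}zx$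 iff $\forall v\in Y(vR^{\partial11}zx\Rightarrow u\perp v)$. Upper bound relation: $uR_\le xz$ iff $x\le u$ and $z\le u$. A Heyting frame is an implicative frame in which $\{u:uR^{111}xz\}=\{u:uR_\le xz\}$ for all $x,z\in X$. Operations: $A\blacktriangleright B=(\{y:\exists x\in A\,\exists v\in B\ yTxv\})''$ for $A\in\mathcal G(X)$, $B\in\mathcal G(Y)$; $A\Rightarrow C={}'(A\blacktriangleright C')$. *)

Set Implicit Arguments.

Section Frames.
Variables (X Y : Type) (perp : X -> Y -> Prop).

Definition primeR (U : X -> Prop) : Y -> Prop := fun y => forall x, U x -> perp x y.
Definition primeL (V : Y -> Prop) : X -> Prop := fun x => forall y, V y -> perp x y.

Definition stable (A : X -> Prop) : Prop := forall x, A x <-> primeL (primeR A) x.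
Definition costable (B : Y -> Prop) : Prop := forall y, B y <-> primeR (primeL B) y.

Definition leX (x z : X) : Prop := forall y, primeR (fun u => u = x) y -> primeR (fun u => u = z) y.
Definition leY (y v : Y) : Prop := forall x, primeL (fun u => u = y) x -> primeL (fun u => u = v) x.

Definition separated : Prop :=
  (forall x z, leX x z -> leX z x -> x = z) /\ (forall y v, leY y v -> leY v y -> y = v).

Variable T : Y -> X -> Y -> Prop.

Definition Tprime (u x : X) (v : Y) : Prop := forall y, T y x v -> perp u y.

Definition implicative_frame : Prop :=
  (exists x : X, True) /\ (exists y : Y, True) /\
  (forall x y, perp x y <-> (forall u, Tprime u x y)) /\
  separated /\
  (forall x v, exists w, forall y, T y x v <-> leY w y) /\
  (forall y x v x1 v1, T y x v -> leX x1 x -> leY v1 v -> T y x1 v1) /\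
  (forall u x v, stable (fun x1 => Tprime u x1 v) /\
                          costable (fun v1 => Tprime u x v1)).

Definition Rd11 (v : Y) (z x : X) : Prop := Tprime x z v.
Definition R111 (u z x : X) : Prop := forall v, Rd11 v z x -> perp u v.
Definition Rle (u x z : X) : Prop := leX x u /\ leX z u.

Definition heyting_frame : Prop :=
  implicative_frame /\ (forall x z u, R111 u x z <-> Rle u x z).

Definition tri (A : X -> Prop) (B : Y -> Prop) : Y -> Prop :=
  primeR (primeL (fun y => exists x v, A x /\ B v /\ T y x v)).
Definition himp (A C : X -> Prop) : X -> Prop := primeL (tri A (primeR C)).

End Frames.

From Stdlib Require Import Setoid.
Set Implicit Arguments.

(* By co-stability (F4), [x T' a v] is determined by the points [u] with
   [u R111 a x], which the Heyting condition identifies with the common upper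
   bounds of [a] and [x].  Since [A => C] consists of the [x] with [x T' a v]
   for all [a] in [A] and [v] in [C'], and stable sets are upward closed,
   membership in [A => C] becomes a purely order-theoretic condition. *)

Section HeytingFrames.
Variables (X Y : Type) (perp : X -> Y -> Prop) (T : Y -> X -> Y -> Prop).

Lemma primeL_primeR_primeL (V : Y -> Prop) (x : X) :
  primeL perp (primeR perp (primeL perp V)) x <-> primeL perp V x.
Proof.
  split.
  - intros Hx y Vy. apply Hx. intros x' Hx'. exact (Hx' y Vy).
  - intros Hx y Hy. exact (Hy x Hx).
Qed.

Lemma leX_refl (x : X) : leX perp x x.
Proof. intros y Hy; exact Hy. Qed.

Lemma stable_leX_closed (A : X -> Prop) (a u : X) :
  stable perp A -> A a -> leX perp a u -> A u.
Proof.
  intros SA Aa Hau.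
  apply (proj2 (SA u)). intros y Hy.
  assert (Hay : perp a y) by exact (proj1 (SA a) Aa y Hy).
  apply (Hau y).
  - intros a' ->; exact Hay.
  - reflexivity.
Qed.

Lemma himp_iff_Tprime (A C : X -> Prop) (x : X) :
  himp perp T A C x <->
  (forall a v, A a -> primeR perp C v -> Tprime perp T x a v).
Proof.
  unfold himp, tri. rewrite primeL_primeR_primeL.
  split.
  - intros Hx a v Aa Cv y Ty. apply Hx. exists a, v. auto.
  - intros Hx y [a [v [Aa [Cv Ty]]]]. exact (Hx a v Aa Cv y Ty).
Qed.

Lemma Tprime_iff_upper_bounds (x a : X) (v : Y) :
  heyting_frame perp T ->
  Tprime perp T x a v <-> (forall u, leX perp a u -> leX perp x u -> perp u v).
Proof.
  intros [[_ [_ [_ [_ [_ [_ F4]]]]]] Heyting].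
  destruct (F4 x a v) as [_ Hcostable].
  rewrite (Hcostable v).
  split.
  - intros Hv u Hau Hxu. apply Hv. apply (proj2 (Heyting a x u)). split; assumption.
  - intros Hv u Hu. destruct (proj1 (Heyting a x u) Hu) as [Hau Hxu].
    exact (Hv u Hau Hxu).
Qed.

End HeytingFrames.

Theorem proposition3p16 (X Y : Type) (perp : X -> Y -> Prop) (T : Y -> X -> Y -> Prop) :
  heyting_frame perp T ->
  forall A C : X -> Prop, stable perp A -> stable perp C ->
  forall x : X,
    himp perp T A C x <-> (forall z : X, leX perp x z -> A z -> C z).
Proof.
  intros HF A C SA SC x.
  rewrite himp_iff_Tprime.
  split.
  - intros Hx z Hxz Az.
    apply (proj2 (SC z)). intros v Cv.
    apply (proj1 (Tprime_iff_upper_bounds x z v HF) (Hx z v Az Cv)).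
    + apply leX_refl.
    + exact Hxz.
  - intros Hup a v Aa Cv.
    apply (proj2 (Tprime_iff_upper_bounds x a v HF)).
    intros u Hau Hxu.
    apply Cv, Hup; [exact Hxu |].
    exact (stable_leX_closed SA Aa Hau).
Qed.
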